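(* A bag generation process $P(s\mid y,x)$ is reconstructible if and only if, for every $x\in\mathcal{X}$, the vectors $\mathbf{p}_{1,x},\mathbf{p}_{2,x},\dots,\mathbf{p}_{|\mathcal{Y}|,x}\in\mathbb{R}^{|\mathcal{S}|}$ are linearly independent.
   Context: Let $\mathcal{X}$ be an instance space, $\mathcal{Y}=\{1,\dots,c\}$ a finite label set, and $\mathcal{S}=2^{\mathcal{Y}}=\{s_1,\dots,s_{|\mathcal{S}|}\}$ the set of bags of labels. A bag generation process is a family of conditional probability distributions $P(\cdot\mid y,x)$ on $\mathcal{S}$, one for each $y\in\mathcal{Y}$, $x\in\mathcal{X}$. For $i\in\mathcal{Y}$ and $x\in\mathcal{X}$ let $\mathbf{p}_{i,x}=(P(s_1\mid i,x),P(s_2\mid i,x),\dots,P(s_{|\mathcal{S}|}\mid i,x))^\top\in\mathbb{R}^{|\mathcal{S}|}$. Let $\Delta(\mathcal{Y})$ denote the set of probability distributions on $\mathcal{Y}$. The bag generation process is called reconstructible if for every $x\in\mathcal{X}$ and all $Q_1,Q_2\in\Delta(\mathcal{Y})$, the equality $\sum_{y\in\mathcal{Y}}P(s\mid y,x)Q_1(y)=\sum_{y\in\mathcal{Y}}P(s\mid y,x)Q_2(y)$ for all $s\in\mathcal{S}$ implies $\arg\max_{y\in\mathcal{Y}}Q_1(y)=\arg\max_{y\in\mathcal{Y}}Q_2(y)$ (equality of sets). *)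

From HB Require Import structures.
From mathcomp Require Import all_boot all_order all_algebra.
From mathcomp Require Import reals.
Set Implicit Arguments. Unset Strict Implicit. Unset Printing Implicit Defensive.
Import Order.TTheory GRing.Theory Num.Theory.
Local Open Scope ring_scope.

(* Labels Y = {1,...,c} are represented by 'I_c; bags S = 2^Y by {set 'I_c}.
   A bag generation process: P x y s = P(s | y, x). *)

Definition is_distr (R : realType) (T : finType) (Q : T -> R) : Prop :=
  (forall t, 0 <= Q t) /\ \sum_(t : T) Q t = 1.

Definition bag_process (R : realType) (X : Type) (c : nat)
  (P : X -> 'I_c -> {set 'I_c} -> R) : Prop :=
  forall x y, is_distr (P x y).

Definition argmax_set (R : realType) (c : nat) (Q : 'I_c -> R) : {set 'I_c} :=
  [set y | [forall y', Q y' <= Q y]].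

Definition reconstructible (R : realType) (X : Type) (c : nat)
  (P : X -> 'I_c -> {set 'I_c} -> R) : Prop :=
  forall (x : X) (Q1 Q2 : 'I_c -> R), is_distr Q1 -> is_distr Q2 ->
    (forall s : {set 'I_c}, \sum_(y < c) P x y s * Q1 y = \sum_(y < c) P x y s * Q2 y) ->
    argmax_set Q1 = argmax_set Q2.

Definition pvec (R : realType) (X : Type) (c : nat)
  (P : X -> 'I_c -> {set 'I_c} -> R) (x : X) (i : 'I_c)
  : 'rV[R]_#|{set 'I_c}| :=
  \row_(j < #|{set 'I_c}|) P x i (enum_val j).

From HB Require Import structures.
From mathcomp Require Import all_boot all_order all_algebra.
From mathcomp Require Import reals.
Import Order.TTheory GRing.Theory Num.Theory.
Set Implicit Arguments. Unset Strict Implicit. Unset Printing Implicit Defensive.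
Local Open Scope ring_scope.

(* If the p_{i,x} are free, equal mixtures force Q1 = Q2.  Conversely, a
   nontrivial kernel vector k sums to 0 (each P(. | y, x) has mass 1), so a
   small multiple of it perturbs the uniform distribution into another
   distribution with the same mixture; the uniform argmax is all of Y, so the
   argmax of the perturbation, which is that of k, must be all of Y too,
   making k constant, hence 0. *)

Lemma free_map_ordP (K : fieldType) (V : vectType K) (c : nat) (f : 'I_c -> V) :
  free [seq f i | i <- enum 'I_c] <->
  (forall k : 'I_c -> K, \sum_(i < c) k i *: f i = 0 -> forall i, k i = 0).
Proof.
have -> : [seq f i | i <- enum 'I_c] = map_tuple f (ord_tuple c) by [].
have combE (k : 'I_c -> K) :
    \sum_(i < c) k i *: (map_tuple f (ord_tuple c))`_i = \sum_(i < c) k i *: f i.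
  by apply: eq_bigr => i _; rewrite /= (nth_map i) ?size_enum_ord // nth_ord_enum.
split => [/freeP free_f k | free_f].
  by rewrite -combE => /free_f.
by apply/freeP => k; rewrite combE; apply: free_f.
Qed.

Section FiniteDistributions.
Variables (R : realType) (c : nat).
Implicit Types (Q k : 'I_c -> R) (u t : R).

Lemma argmax_set_cst u : argmax_set (fun _ : 'I_c => u) = setT.
Proof. by apply/setP => y; rewrite !inE; apply/forallP. Qed.

Lemma argmax_set_affine u t k :
  0 < t -> argmax_set (fun y => u + t * k y) = argmax_set k.
Proof.
move=> t_gt0; apply/setP => y; rewrite !inE.
by apply: eq_forallb => z; rewrite lerD2l ler_pM2l.
Qed.

Lemma argmax_setT_cst Q : argmax_set Q = setT -> forall y z, Q y = Q z.
Proof.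
move=> QT y z; have max_at w : w \in argmax_set Q by rewrite QT inE.
move: (max_at y) (max_at z); rewrite !inE => /forallP/(_ z) Qzy /forallP/(_ y) Qyz.
by apply/eqP; rewrite eq_le Qyz Qzy.
Qed.

Lemma cst_sum_eq0 k : (forall y z, k y = k z) -> \sum_(y < c) k y = 0 ->
  forall y, k y = 0.
Proof.
move=> k_cst + y; under eq_bigr => z _ do rewrite (k_cst z y).
rewrite sumr_const card_ord => /eqP; rewrite mulrn_eq0 => /orP[|/eqP //].
by move/eqP => c0; have := ltn_ord y; rewrite [X in (_ < X)%N]c0.
Qed.

Lemma uniform_distr : (0 < c)%N -> is_distr (fun _ : 'I_c => c%:R^-1 : R).
Proof.
move=> c_gt0; split => [y|]; first by rewrite invr_ge0 ler0n.
have c_neq0 : c%:R != 0 :> R by rewrite pnatr_eq0 -lt0n.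
by rewrite sumr_const card_ord -[in RHS](mulVf c_neq0) mulr_natr.
Qed.

Lemma perturbed_uniform_distr k : (0 < c)%N -> \sum_(y < c) k y = 0 ->
  exists2 t, 0 < t & is_distr (fun y => c%:R^-1 + t * k y).
Proof.
move=> c_gt0 sum_k0; pose u : R := c%:R^-1; pose M := 1 + \sum_(y < c) `|k y|.
have u_gt0 : 0 < u by rewrite invr_gt0 ltr0n.
have M_gt0 : 0 < M by rewrite ltr_pwDl // sumr_ge0.
have kM y : `|k y| <= M.
  by rewrite /M (bigD1 y) //= addrCA lerDl addr_ge0 // sumr_ge0.
(* with t := u / M, the perturbation is u / M * (M + k y) and |k y| <= M *)
exists (u / M); first by rewrite divr_gt0.
split => [y|]; last first.
  by rewrite big_split /= -mulr_sumr sum_k0 mulr0 addr0; case: (uniform_distr c_gt0).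
rewrite -[u in u + _](divfK (lt0r_neq0 M_gt0)) -mulrDr mulr_ge0 //.
  by rewrite divr_ge0 // ltW.
by rewrite -[k y]opprK subr_ge0 (le_trans _ (kM y)) // -normrN ler_norm.
Qed.

End FiniteDistributions.

Section Mixture.
Variables (R : realType) (X : Type) (c : nat) (P : X -> 'I_c -> {set 'I_c} -> R).

Definition mixture (x : X) (Q : 'I_c -> R) (s : {set 'I_c}) : R :=
  \sum_(y < c) P x y s * Q y.

Lemma mixtureB x Q1 Q2 s :
  mixture x (fun y => Q1 y - Q2 y) s = mixture x Q1 s - mixture x Q2 s.
Proof. by rewrite /mixture -sumrB; apply: eq_bigr => y _; rewrite mulrBr. Qed.

Lemma mixture_affine x u t k s :
  mixture x (fun y => u + t * k y) s = mixture x (fun=> u) s + t * mixture x k s.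
Proof.
rewrite /mixture mulr_sumr -big_split; apply: eq_bigr => y _.
by rewrite mulrDr mulrCA.
Qed.

Lemma sum_mixture x Q : bag_process P ->
  \sum_(s : {set 'I_c}) mixture x Q s = \sum_(y < c) Q y.
Proof.
move=> bagP; rewrite exchange_big; apply: eq_bigr => y _.
by rewrite -mulr_suml (proj2 (bagP x y)) mul1r.
Qed.

Lemma free_pvecP x :
  free [seq pvec P x i | i <- enum 'I_c] <->
  (forall k, (forall s, mixture x k s = 0) -> forall i, k i = 0).
Proof.
rewrite free_map_ordP.
have combE k s : (\sum_(i < c) k i *: pvec P x i) 0 (enum_rank s) = mixture x k s.
  by rewrite summxE; apply: eq_bigr => i _; rewrite !mxE enum_rankK mulrC.
split => free_p k mix_k0; apply: free_p.
  by apply/rowP => j; rewrite -(enum_valK j) combE mix_k0 mxE.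
by move=> s; rewrite -combE mix_k0 mxE.
Qed.

Lemma free_pvec_reconstructible x Q1 Q2 :
  free [seq pvec P x i | i <- enum 'I_c] ->
  (forall s, mixture x Q1 s = mixture x Q2 s) -> argmax_set Q1 = argmax_set Q2.
Proof.
move=> /free_pvecP free_p mix_eq.
have Q12 y : Q1 y = Q2 y.
  apply/eqP; rewrite -subr_eq0; apply/eqP.
  by apply: (free_p (fun z => Q1 z - Q2 z)) => s; rewrite mixtureB mix_eq subrr.
by apply/setP => y; rewrite !inE; apply: eq_forallb => z; rewrite !Q12.
Qed.

Lemma reconstructible_free_pvec x : bag_process P -> reconstructible P ->
  free [seq pvec P x i | i <- enum 'I_c].
Proof.
move=> bagP recP; apply/free_pvecP => k mix_k0 i.
have c_gt0 : (0 < c)%N := leq_ltn_trans (leq0n i) (ltn_ord i).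
have sum_k0 : \sum_(y < c) k y = 0.
  by rewrite -(sum_mixture x k bagP) big1.
have [t t_gt0 distr_t] := perturbed_uniform_distr c_gt0 sum_k0.
have := recP x _ _ (uniform_distr R c_gt0) distr_t.
rewrite argmax_set_cst argmax_set_affine // => argmax_k.
apply: (cst_sum_eq0 _ sum_k0); apply/argmax_setT_cst/esym/argmax_k.
by move=> s; rewrite -[RHS]/(mixture x _ s) mixture_affine mix_k0 mulr0 addr0.
Qed.

End Mixture.

Theorem theorem1 (R : realType) (X : Type) (c : nat)
  (P : X -> 'I_c -> {set 'I_c} -> R) :
  bag_process P ->
  (reconstructible P <->
   forall x : X, free [seq pvec P x i | i <- enum 'I_c]).
Proof.
move=> bagP; split => [recP x | free_p x Q1 Q2 _ _].
  exact: reconstructible_free_pvec.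
exact: free_pvec_reconstructible (free_p x).
Qed.
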